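(* Let $x(z)$ be a holomorphic function on an open set $\Omega\subset\mathbf{C}$ with $\ddot{x}=d^2x/dz^2$ not identically zero, and define the meromorphic function $f(z)=z+2\dot{x}(z)/\ddot{x}(z)$, where $\dot{x}=dx/dz$. If $g\in PSL(2,\mathbf{C})$, acting by Möbius transformation, satisfies $g(\Omega)=\Omega$ and $x(gz)=x(z)$, then $f$ is covariant under $g$: $f(g(z))=g(f(z))$.
   Context: In the paper, $x(z)$ is the inverse of the Schwarz map $S$ of the hypergeometric equation restricted to the upper half-plane, and $f=DS\circ S^{-1}$ is expressed as $f(z)=z+2\dot{x}/\ddot{x}$, where $DS$ is the derived Schwarz map. *)

(* with MathComp-Analysis; complex numbers = R[i] from
   mathcomp-real-closed, viewed as a numFieldType (hence a normed module over
   itself, so [derivable f z 1] is complex differentiability). *)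
From mathcomp Require Import all_boot all_order all_algebra.
From mathcomp Require Export complex.
From mathcomp Require Export all_classical all_reals all_analysis.
Export numFieldNormedType.Exports.
Set Implicit Arguments. Unset Strict Implicit. Unset Printing Implicit Defensive.
Import GRing.Theory Num.Theory.
Local Open Scope ring_scope.
Local Open Scope classical_set_scope.

Definition CC (R : realType) : numFieldType := R[i].

Definition holomorphic_on (R : realType) (O : set (CC R)) (f : CC R -> CC R) :=
  forall z, O z -> derivable f z 1.

(* An element of PSL(2,C), represented by a matrix [a b; c d] of SL(2,C)
   (both lifts ±g give the same Möbius transformation). *)
Definition SL2 (R : realType) (a b c d : CC R) := a * d - b * c = 1.

(* The Möbius action z |-> (a z + b)/(c z + d) at a finite point whose image
   is finite (c z + d <> 0). *)
Definition mobius (R : realType) (a b c d : CC R) (z : CC R) : CC R :=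
  (a * z + b) / (c * z + d).

Definition fDS (R : realType) (x : CC R -> CC R) (z : CC R) : CC R :=
  z + 2 * derive1 x z / derive1 (derive1 x) z.

From mathcomp Require Import all_boot all_order all_algebra.
From mathcomp Require Import all_classical all_reals all_analysis.
From mathcomp Require Import ring.
Import GRing.Theory Num.Theory.
Local Open Scope ring_scope.
Local Open Scope classical_set_scope.

(* Write j = c z + d, so that g' = j^-2 because ad - bc = 1.  Differentiating
   x o g = x gives x'(g z) = j^2 x'(z); differentiating this identity once more
   gives x''(g z) = j^3 (j x''(z) + 2 c x'(z)).  Hence
   f(g z) = g z + 2 x' / (j (j x'' + 2 c x')), and since
   g w - g z = (w - z) / (j(z) j(w)), this is g(z + 2 x'/x'') = g(f z). *)

Section NumFieldDerivatives.
Context {K : numFieldType}.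

Lemma derive1_comp_num {f g : K -> K} {z : K} :
  derivable f z 1 -> derivable g (f z) 1 ->
  derive1 (g \o f) z = derive1 g (f z) * derive1 f z.
Proof.
move=> /derivable1_diffP df /derivable1_diffP dg.
rewrite derive1E'; last exact/differentiable_comp.
rewrite diff_comp // !derive1E' //= -[X in 'd  _ _ X = _]mulr1.
by rewrite [LHS]linearZ mulrC.
Qed.

Lemma derive1_invariant {f g : K -> K} {z : K} :
  (\forall u \near z, f (g u) = f u) -> derivable g z 1 -> derivable f (g z) 1 ->
  derive1 f z = derive1 f (g z) * derive1 g z.
Proof.
move=> fgf dg df; rewrite -derive1_comp_num //.
by rewrite !derive1E; apply: near_eq_derive; apply: filterS fgf => u /= ->.
Qed.

(* The binder is typed [K] rather than the normed-module carrier, so that the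
   function below is syntactically the one written in later statements. *)
Lemma is_derive_affine (k m z : K) : is_derive z 1 (fun u : K => k * u + m) k.
Proof.
have -> : (fun u => k * u + m) = k *: (@id K) + cst m by [].
by apply: is_derive_eq; rewrite addr0 /GRing.scale /= mulr1.
Qed.

Lemma is_derive_inv_affine {k m z : K} : k * z + m != 0 ->
  is_derive z 1 (fun u => (k * u + m)^-1) (- k / (k * z + m) ^+ 2).
Proof.
move=> nz; have [da Da] := is_derive_affine k m z.
apply: DeriveDef; first exact: derivableV.
by rewrite deriveV // Da /GRing.scale /= mulNr [_ * k]mulrC mulNr.
Qed.
End NumFieldDerivatives.

Section Mobius.
Context {R : realType} {a b c d : CC R} (sl2 : SL2 a b c d).

Lemma mobius_sub z w : c * z + d != 0 -> c * w + d != 0 ->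
  mobius a b c d w - mobius a b c d z = (w - z) / ((c * z + d) * (c * w + d)).
Proof. by move=> jz jw; rewrite /mobius -[w - z]mul1r -sl2; field; rewrite jz jw. Qed.

Lemma is_derive_mobius z : c * z + d != 0 ->
  is_derive z 1 (mobius a b c d) ((c * z + d) ^- 2).
Proof.
move=> jz.
have -> : mobius a b c d = (fun u => a * u + b) * (fun u => (c * u + d)^-1) by [].
apply: is_derive_eq (is_deriveM (is_derive_affine a b z) (is_derive_inv_affine jz)) _.
rewrite /GRing.scale /= -[RHS]mul1r -sl2; field; exact: jz.
Qed.

Lemma mobius_shift z P Q :
  c * z + d != 0 -> Q != 0 -> (c * z + d) * Q + 2 * c * P != 0 ->
  c * (z + 2 * P / Q) + d != 0 /\
  mobius a b c d z +
    2 * (P * (c * z + d) ^+ 2) / ((c * z + d) ^+ 3 * ((c * z + d) * Q + 2 * c * P))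
  = mobius a b c d (z + 2 * P / Q).
Proof.
move=> jz Q0 S0.
have jw : c * (z + 2 * P / Q) + d = ((c * z + d) * Q + 2 * c * P) / Q by field.
have jw0 : c * (z + 2 * P / Q) + d != 0 by rewrite jw mulf_neq0 ?invr_eq0.
split=> //; rewrite -[RHS](subrK (mobius a b c d z)) mobius_sub // jw.
by field; rewrite jz Q0 S0.
Qed.
End Mobius.

Section MobiusInvariantFunction.
Context {R : realType} {O : set (CC R)} {x : CC R -> CC R} {a b c d : CC R}.
Hypotheses (openO : open O) (hx : holomorphic_on O x)
  (hx' : holomorphic_on O (derive1 x)).
Hypotheses (sl2 : SL2 a b c d) (jO : forall z, O z -> c * z + d != 0).
Hypotheses (gO : forall z, O z -> O (mobius a b c d z))
  (xg : forall z, O z -> x (mobius a b c d z) = x z).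
Local Notation g := (mobius a b c d).

Lemma derive1_mobius_invariant z : O z ->
  derive1 x (g z) = derive1 x z * (c * z + d) ^+ 2.
Proof.
move=> Oz; have [dg g'] := is_derive_mobius sl2 z (jO z Oz).
have xgx : \forall u \near z, x (g u) = x u.
  by apply: filterS (openO z Oz) => u; exact: xg.
rewrite -derive1E in g'.
rewrite (derive1_invariant xgx dg (hx _ (gO _ Oz))) g' divfK //.
by rewrite expf_neq0 // jO.
Qed.

Lemma derive2_mobius_invariant z : O z ->
  derive1 (derive1 x) (g z) =
  (c * z + d) ^+ 3 * ((c * z + d) * derive1 (derive1 x) z + 2 * c * derive1 x z).
Proof.
move=> Oz; have [dg g'] := is_derive_mobius sl2 z (jO z Oz).
have dx' : is_derive z 1 (derive1 x) (derive1 (derive1 x) z).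
  by apply: DeriveDef; [exact: hx' | rewrite derive1E].
have [_ dR] := is_deriveM dx' (is_deriveX 2 (is_derive_affine c d z)).
rewrite -derive1E in g'.
have E : derive1 (derive1 x) (g z) * derive1 g z =
         'D_1 (derive1 x * (fun u : CC R => c * u + d) ^+ 2) z.
  rewrite -(derive1_comp_num dg (hx' _ (gO _ Oz))) derive1E.
  apply: near_eq_derive; apply: filterS (openO z Oz) => u Ou.
  by rewrite /= derive1_mobius_invariant.
rewrite dR g' in E.
have j2 : (c * z + d) ^+ 2 != 0 by rewrite expf_neq0 // jO.
have hz : ((fun u : CC R => c * u + d) ^+ 2) z = (c * z + d) ^+ 2 by [].
move: E; rewrite hz /GRing.scale /=.
(* Abstracting the derivatives keeps [ring] from comparing them up to
   unfolding of their structure instances, which does not terminate in practice. *)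
move: (derive1 x z) (derive1 (derive1 x) z) (derive1 (derive1 x) (g z)) => P Q Q' E.
by rewrite -(divfK j2 Q') E; ring.
Qed.

End MobiusInvariantFunction.

Theorem proposition3p1 (R : realType) (O : set (CC R)) (x : CC R -> CC R)
    (a b c d : CC R) :
  open O ->
  holomorphic_on O x ->
  holomorphic_on O (derive1 x) ->
  (exists z0, O z0 /\ derive1 (derive1 x) z0 != 0) ->
  SL2 a b c d ->
  (* g(Ω) = Ω, with Ω ⊂ C (so g has no pole in Ω) *)
  (forall z, O z -> c * z + d != 0) ->
  mobius a b c d @` O = O ->
  (forall z, O z -> x (mobius a b c d z) = x z) ->
  forall z, O z ->
    derive1 (derive1 x) z != 0 ->
    derive1 (derive1 x) (mobius a b c d z) != 0 ->
    c * fDS x z + d != 0 /\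
    fDS x (mobius a b c d z) = mobius a b c d (fDS x z).
Proof.
(* x'' is only needed to be nonzero at z and g z, not somewhere in O. *)
move=> openO hx hx' _ sl2 jO gOO xg z Oz x''z x''gz.
have gO u : O u -> O (mobius a b c d u) by move=> Ou; rewrite -gOO; exists u.
have x''g := derive2_mobius_invariant openO hx hx' sl2 jO gO xg z Oz.
have S0 : (c * z + d) * derive1 (derive1 x) z + 2 * c * derive1 x z != 0.
  by move: x''gz; rewrite x''g mulf_eq0 negb_or => /andP[].
rewrite /fDS x''g (derive1_mobius_invariant openO hx sl2 jO gO xg z Oz).
exact: mobius_shift sl2 _ _ _ (jO z Oz) x''z S0.
Qed.
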